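(* Let $N\ge1$, $c\in\mathbb{R}$, and consider the manifold of Jacobi parameters $a_1,\dots,a_{N-1}>0$, $b_1,\dots,b_N\in\mathbb{R}$ with $\sum_jb_j=c$, with the Poisson bracket described in the context. For $1\le n\le N$ let $P_n,Q_n$ be as in the context and $m_n(x)=-Q_n(x)/P_n(x)$. Then (wherever $P_n(y)\neq0$) \[ \{P_n(x),m_n(y)\}=\tfrac12\Bigl[Q_n(x)m_n(y)-\frac{P_n(x)m_n(y)+Q_n(x)}{x-y}\Bigr], \] \[ \{Q_n(x),m_n(y)\}=\tfrac12\Bigl[-Q_n(x)m_n(y)^2+m_n(y)\frac{P_n(x)m_n(y)+Q_n(x)}{x-y}\Bigr]. \]
   Context: The Poisson bracket is the bilinear antisymmetric bracket satisfying the Leibniz rule whose only nonzero brackets among the coordinates are $\{b_k,a_k\}=-\tfrac14 a_k$ ($k=1,\dots,N-1$) and $\{b_k,a_{k-1}\}=\tfrac14 a_{k-1}$ ($k=2,\dots,N$); auxiliary variables $x,y$ are held fixed. With $J(b_1,\dots,b_m;a_1,\dots,a_{m-1})$ the $m\times m$ tridiagonal symmetric matrix with diagonal $b_1,\dots,b_m$ and off-diagonal entries $a_1,\dots,a_{m-1}$: $P_n(x)=\det(x-J(b_1,\dots,b_n;a_1,\dots,a_{n-1}))$ and $Q_n(x)=\det(x-J(b_2,\dots,b_n;a_2,\dots,a_{n-1}))$. *)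

From HB Require Import structures.
From mathcomp Require Import all_boot all_order all_algebra.
From mathcomp Require Import all_classical all_reals all_analysis.
Set Implicit Arguments. Unset Strict Implicit. Unset Printing Implicit Defensive.
Import Order.TTheory GRing.Theory Num.Theory.
Local Open Scope ring_scope.

Section Defs.
Variable R : realType.

(* Coordinates: a k (k = 1..N-1) and b k (k = 1..N), 1-based, stored as
   sequences nat -> R (entries outside the index range are irrelevant). *)

Definition Jmat (m : nat) (b a : nat -> R) : 'M[R]_m :=
  \matrix_(i < m, j < m)
    (if i == j :> nat then b i.+1
     else if j == i.+1 :> nat then a i.+1
     else if i == j.+1 :> nat then a j.+1
     else 0).

Definition Ppoly (n : nat) (a b : nat -> R) (x : R) : R :=
  \det (x%:M - Jmat n b a).

Definition Qpoly (n : nat) (a b : nat -> R) (x : R) : R :=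
  \det (x%:M - Jmat n.-1 (fun k => b k.+1) (fun k => a k.+1)).

Definition mJac (n : nat) (a b : nat -> R) (y : R) : R :=
  - Qpoly n a b y / Ppoly n a b y.

Definition upd (s : nat -> R) (k : nat) (t : R) : nat -> R :=
  fun i => if i == k then t else s i.

Definition da (k : nat) (F : (nat -> R) -> (nat -> R) -> R) (a b : nat -> R) : R :=
  derive1 (fun t => F (upd a k t) b) (a k).
Definition db (k : nat) (F : (nat -> R) -> (nat -> R) -> R) (a b : nat -> R) : R :=
  derive1 (fun t => F a (upd b k t)) (b k).

(* The Poisson bracket: the bilinear antisymmetric Leibniz bracket
   {F,G} = sum_{u,v} dF/du dG/dv {u,v}, whose only nonzero coordinate
   brackets are {b_k,a_k} = -a_k/4 (k=1..N-1), {b_k,a_{k-1}} = a_{k-1}/4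
   (k=2..N). *)
Definition pbracket (N : nat) (F G : (nat -> R) -> (nat -> R) -> R)
    (a b : nat -> R) : R :=
  \sum_(1 <= k < N)
     (- (a k / 4)) * (db k F a b * da k G a b - da k F a b * db k G a b)
  + \sum_(2 <= k < N.+1)
     (a k.-1 / 4) * (db k F a b * da k.-1 G a b - da k.-1 F a b * db k G a b).

End Defs.

(** Expanding the determinant along its first row gives the transfer recursion
    P_(n+1) = (x - b_1) P_n' - a_1^2 Q_n' and Q_(n+1) = P_n', where ' means
    that the first site of the chain has been removed.  Since the bracket only
    pairs a_k with b_k - b_(k+1), the bracket of two functions built this way
    is the contribution of the first edge (a_1, b_1, b_2) plus the bracket of
    the shifted chain.  Induction on n then gives {P(x), P(y)} = {Q(x), Q(y)} = 0
    and 2 (x - y) {P(x), Q(y)} = (x - y) Q(x) Q(y) + Q(x) P(y) - P(x) Q(y),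
    from which the brackets with m = -Q/P follow by the quotient rule. *)

From HB Require Import structures.
From mathcomp Require Import all_boot all_order all_algebra.
From mathcomp Require Import all_classical all_reals all_analysis.
From mathcomp Require Import ring.

Set Implicit Arguments.
Unset Strict Implicit.
Unset Printing Implicit Defensive.

Import Order.TTheory GRing.Theory Num.Theory.
Local Open Scope ring_scope.

Section JacobiBracket.
Variable R : realType.
Implicit Types (a b s : nat -> R) (F G H : (nat -> R) -> (nat -> R) -> R).

(** Slot k holds the derivatives in a_(k+1) and b_(k+1): the unused entry 0
    of the coordinate sequences gets no slot. *)
Definition gradient := ((nat -> R) * (nat -> R))%type.
Implicit Types (f g : gradient).

Lemma gradDE f g : f + g = (fun k => f.1 k + g.1 k, fun k => f.2 k + g.2 k).
Proof. by []. Qed.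

Lemma gradNE f : - f = (fun k => - f.1 k, fun k => - f.2 k).
Proof. by []. Qed.

Lemma gradZE r f : r *: f = (fun k => r * f.1 k, fun k => r * f.2 k).
Proof. by []. Qed.

Definition drop1 s : nat -> R := fun k => s k.+1.

Definition gcons (u v : R) g : gradient :=
  (fun k => if k is k'.+1 then g.1 k' else u,
   fun k => if k is k'.+1 then g.2 k' else v).

Lemma gconsD u v f u' v' g :
  gcons u v f + gcons u' v' g = gcons (u + u') (v + v') (f + g).
Proof. by congr (_, _); apply: funext => -[|k]; rewrite /= !fctE. Qed.

Lemma gconsZ r u v f : r *: gcons u v f = gcons (r * u) (r * v) (r *: f).
Proof. by congr (_, _); apply: funext => -[|k]; rewrite /= !fctE. Qed.

Lemma gconsN u v f : - gcons u v f = gcons (- u) (- v) (- f).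
Proof. by rewrite -scaleN1r gconsZ !mulN1r scaleN1r. Qed.

Lemma gconsB u v f u' v' g :
  gcons u v f - gcons u' v' g = gcons (u - u') (v - v') (f - g).
Proof. by rewrite gconsN gconsD. Qed.

Lemma gcons0 : gcons 0 0 0 = 0.
Proof. by congr (_, _); apply: funext => -[|k]. Qed.

Definition pform N a f g : R :=
  \sum_(0 <= k < N.-1)
    a k.+1 / 4 * (f.1 k * (g.2 k - g.2 k.+1) - (f.2 k - f.2 k.+1) * g.1 k).

Section Bilinear.
Variables (N : nat) (a : nat -> R).

Lemma pformDl f f' g : pform N a (f + f') g = pform N a f g + pform N a f' g.
Proof.
by rewrite /pform -big_split; apply: eq_bigr => k _; rewrite gradDE /=; ring.
Qed.

Lemma pformZl r f g : pform N a (r *: f) g = r * pform N a f g.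
Proof.
by rewrite /pform big_distrr; apply: eq_bigr => k _; rewrite gradZE /=; ring.
Qed.

Lemma pformC f g : pform N a f g = - pform N a g f.
Proof. by rewrite /pform -sumrN; apply: eq_bigr => k _; ring. Qed.

Lemma pformBl f f' g : pform N a (f - f') g = pform N a f g - pform N a f' g.
Proof. by rewrite pformDl -scaleN1r pformZl mulN1r. Qed.

Lemma pformDr f g g' : pform N a f (g + g') = pform N a f g + pform N a f g'.
Proof. by rewrite pformC pformDl opprD -!pformC. Qed.

Lemma pformZr r f g : pform N a f (r *: g) = r * pform N a f g.
Proof. by rewrite pformC pformZl -mulrN -pformC. Qed.

Lemma pformNr f g : pform N a f (- g) = - pform N a f g.
Proof. by rewrite -scaleN1r pformZr mulN1r. Qed.

Lemma pformBr f g g' : pform N a f (g - g') = pform N a f g - pform N a f g'.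
Proof. by rewrite pformDr pformNr. Qed.

Lemma pform0r f : pform N a f 0 = 0.
Proof. by rewrite -(scale0r 0) pformZr mul0r. Qed.

Lemma pformxx f : pform N a f f = 0.
Proof. by rewrite /pform big1 // => k _; ring. Qed.

End Bilinear.

Lemma pform_gcons N a u v u' v' f g :
  pform N.+2 a (gcons u v f) (gcons u' v' g)
  = a 1 / 4 * (u * (v' - g.2 0) - (v - f.2 0) * u') + pform N.+1 (drop1 a) f g.
Proof. by rewrite /pform big_nat_recl. Qed.

Definition grad F a b : gradient :=
  (fun k => da k.+1 F a b, fun k => db k.+1 F a b).

Lemma pbracketE N F G a b :
  pbracket N F G a b = pform N a (grad F a b) (grad G a b).
Proof.
rewrite /pbracket /pform !big_add1 /= -big_split /=.
by apply: eq_bigr => k _; rewrite /grad /=; ring.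
Qed.

Lemma pbracketC N F G a b : pbracket N F G a b = - pbracket N G F a b.
Proof. by rewrite !pbracketE pformC. Qed.

Definition is_grad F a b g : Prop :=
  forall k, is_derive (a k.+1) 1 (fun t => F (upd a k.+1 t) b) (g.1 k)
         /\ is_derive (b k.+1) 1 (fun t => F a (upd b k.+1 t)) (g.2 k).

Definition derivable_coords F a b := is_grad F a b (grad F a b).

Lemma is_grad_grad F a b g : is_grad F a b g -> grad F a b = g.
Proof.
case: g => ga gb dF; congr (_, _); apply: funext => k;
  by have [? ?] := dF k; rewrite /da /db derive1E derive_val.
Qed.

Lemma is_grad_eq F a b g g' : is_grad F a b g -> g = g' -> is_grad F a b g'.
Proof. by move=> ? <-. Qed.

Lemma is_grad_derivable F a b g : is_grad F a b g -> derivable_coords F a b.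
Proof. by move=> dF; rewrite /derivable_coords (is_grad_grad dF). Qed.

Lemma upd_id s k : upd s k (s k) = s.
Proof. by apply: funext => i; rewrite /upd; case: eqP => // ->. Qed.

Section GradientRules.
Variables a b : nat -> R.

Lemma is_grad_cst (c : R) : is_grad (fun _ _ => c) a b 0.
Proof. by move=> k; split; apply: is_derive_cst. Qed.

Lemma is_grad_a1 : is_grad (fun a _ => a 1%N) a b (gcons 1 0 0).
Proof.
by case=> [|k]; split=> /=; [apply: is_derive_id | apply: is_derive_cst ..].
Qed.

Lemma is_grad_b1 : is_grad (fun _ b => b 1%N) a b (gcons 0 1 0).
Proof.
by case=> [|k]; split=> /=;
  [apply: is_derive_cst | apply: is_derive_id | apply: is_derive_cst ..].
Qed.

Lemma is_gradB F G f g : is_grad F a b f -> is_grad G a b g ->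
  is_grad (fun a b => F a b - G a b) a b (f - g).
Proof.
move=> dF dG k; have [dFa dFb] := dF k; have [dGa dGb] := dG k.
by split; [apply: is_deriveB dFa dGa | apply: is_deriveB dFb dGb].
Qed.

Lemma is_gradN F f : is_grad F a b f -> is_grad (fun a b => - F a b) a b (- f).
Proof.
move=> dF k; have [dFa dFb] := dF k.
by split; [apply: is_deriveN dFa | apply: is_deriveN dFb].
Qed.

Lemma is_gradM F G f g : is_grad F a b f -> is_grad G a b g ->
  is_grad (fun a b => F a b * G a b) a b (F a b *: g + G a b *: f).
Proof.
move=> dF dG k; have [dFa dFb] := dF k; have [dGa dGb] := dG k.
split; [have := is_deriveM dFa dGa | have := is_deriveM dFb dGb];
  rewrite /= !upd_id => D; exact: D.
Qed.

Lemma is_gradX F f n : is_grad F a b f ->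
  is_grad (fun a b => F a b ^+ n) a b ((n%:R * F a b ^+ n.-1) *: f).
Proof.
move=> dF k; have [dFa dFb] := dF k.
split; [have := is_deriveX n dFa | have := is_deriveX n dFb];
  rewrite /= !upd_id exprfctE => D; exact: D.
Qed.

Lemma is_gradV F f : F a b != 0 -> is_grad F a b f ->
  is_grad (fun a b => (F a b)^-1) a b (- (F a b) ^- 2 *: f).
Proof.
move=> F_neq0 dF k; have [dFa dFb] := dF k.
have Fa_neq0 : F (upd a k.+1 (a k.+1)) b != 0 by rewrite upd_id.
have Fb_neq0 : F a (upd b k.+1 (b k.+1)) != 0 by rewrite upd_id.
split; [have := is_deriveV Fa_neq0 dFa | have := is_deriveV Fb_neq0 dFb];
  rewrite /= !upd_id => D; exact: D.
Qed.

End GradientRules.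

Definition indep0 F :=
  forall a b t, F (upd a 0 t) b = F a b /\ F a (upd b 0 t) = F a b.

(** Since [drop1 a 0 = a 1], without [indep0 F] the function [F (drop1 a) _]
    could depend on a_1 through the unused entry 0. *)
Lemma is_grad_drop1 F a b g : indep0 F -> is_grad F (drop1 a) (drop1 b) g ->
  is_grad (fun a b => F (drop1 a) (drop1 b)) a b (gcons 0 0 g).
Proof.
move=> F0 dF [|k]; last exact: dF k.
have const_a : (fun t => F (drop1 (upd a 1 t)) (drop1 b)) = cst (F (drop1 a) (drop1 b)).
  by apply: funext => t; exact: (F0 (drop1 a) (drop1 b) t).1.
have const_b : (fun t => F (drop1 a) (drop1 (upd b 1 t))) = cst (F (drop1 a) (drop1 b)).
  by apply: funext => t; exact: (F0 (drop1 a) (drop1 b) t).2.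
by rewrite /= const_a const_b; split; apply: is_derive_cst.
Qed.

Lemma pbracketNr N F G a b : derivable_coords G a b ->
  pbracket N F (fun a b => - G a b) a b = - pbracket N F G a b.
Proof. by move=> dG; rewrite !pbracketE (is_grad_grad (is_gradN dG)) pformNr. Qed.

Lemma pbracket_divr N F G H a b :
  derivable_coords G a b -> derivable_coords H a b -> H a b != 0 ->
  pbracket N F (fun a b => G a b / H a b) a b
  = (H a b * pbracket N F G a b - G a b * pbracket N F H a b) / H a b ^+ 2.
Proof.
move=> dG dH H_neq0; rewrite !pbracketE.
rewrite (is_grad_grad (is_gradM dG (is_gradV H_neq0 dH))) pformDr !pformZr.
by field.
Qed.

Section JacobiPolynomials.
Variable x : R.

Local Notation Pfun n := (fun a b => Ppoly n a b x).
Local Notation Qfun n := (fun a b => Qpoly n a b x).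

Lemma Ppoly0 a b : Ppoly 0 a b x = 1.
Proof. exact: det_mx00. Qed.

Lemma Ppoly1 a b : Ppoly 1 a b x = x - b 1%N.
Proof. by rewrite /Ppoly det_mx11 !mxE mulr1n. Qed.

Lemma QpolyS n a b : Qpoly n.+1 a b x = Ppoly n (drop1 a) (drop1 b) x.
Proof. by []. Qed.

Lemma Ppoly_rec n a b :
  Ppoly n.+2 a b x = (x - b 1%N) * Ppoly n.+1 (drop1 a) (drop1 b) x
                     - a 1%N ^+ 2 * Qpoly n.+1 (drop1 a) (drop1 b) x.
Proof.
rewrite /Ppoly (expand_det_row _ ord0) !big_ord_recl big1 ?addr0; last first.
  by move=> i _; rewrite !mxE mulr0n subr0 mul0r.
have minor00 m s s' : row' ord0 (col' ord0 (x%:M - Jmat m.+1 s s'))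
                      = x%:M - Jmat m (drop1 s) (drop1 s').
  by apply/matrixP => i j; rewrite !mxE.
rewrite /cofactor minor00 !mxE /=.
set M := row' _ _.
have -> : \det M = - a 1%N * \det (x%:M - Jmat n (drop1 (drop1 b)) (drop1 (drop1 a))).
  rewrite (expand_det_col _ ord0) big_ord_recl big1 ?addr0; last first.
    by move=> i _; rewrite /M !mxE mulr0n subr0 mul0r.
  rewrite /cofactor /M !mxE /= mulr0n sub0r expr0 mul1r mulNr [RHS]mulNr.
  by congr (- (_ * \det _)); apply/matrixP => i j; rewrite !mxE.
by rewrite mulr1n mulr0n sub0r /Qpoly /=; ring.
Qed.

Lemma Ppoly_indep0 n : indep0 (Pfun n).
Proof. by []. Qed.

Lemma Qpoly_indep0 n : indep0 (Qfun n).
Proof. by []. Qed.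

Lemma is_grad_Ppoly0 a b : is_grad (Pfun 0) a b 0.
Proof.
have -> : Pfun 0 = fun _ _ => 1 by do 2!apply: funext => ?; rewrite Ppoly0.
exact: is_grad_cst.
Qed.

Lemma is_grad_Ppoly1 a b : is_grad (Pfun 1) a b (gcons 0 (-1) 0).
Proof.
have -> : Pfun 1 = fun _ b => x - b 1%N by do 2!apply: funext => ?; rewrite Ppoly1.
apply: is_grad_eq (is_gradB (is_grad_cst a b x) (is_grad_b1 a b)) _.
by rewrite sub0r gconsN !oppr0.
Qed.

Lemma is_grad_QpolyS n a b g : is_grad (Pfun n) (drop1 a) (drop1 b) g ->
  is_grad (Qfun n.+1) a b (gcons 0 0 g).
Proof. exact: is_grad_drop1 (Ppoly_indep0 n). Qed.

Lemma is_grad_Ppoly_rec n a b gp gq :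
  is_grad (Pfun n.+1) (drop1 a) (drop1 b) gp ->
  is_grad (Qfun n.+1) (drop1 a) (drop1 b) gq ->
  is_grad (Pfun n.+2) a b
    (gcons (- (2 * a 1%N * Qpoly n.+1 (drop1 a) (drop1 b) x))
           (- Ppoly n.+1 (drop1 a) (drop1 b) x)
           ((x - b 1%N) *: gp - a 1%N ^+ 2 *: gq)).
Proof.
move=> dP dQ; have -> : Pfun n.+2 = fun a b =>
    (x - b 1%N) * Ppoly n.+1 (drop1 a) (drop1 b) x
    - a 1%N ^+ 2 * Qpoly n.+1 (drop1 a) (drop1 b) x.
  by do 2!apply: funext => ?; rewrite Ppoly_rec.
apply: is_grad_eq (is_gradB
  (is_gradM (is_gradB (is_grad_cst a b x) (is_grad_b1 a b))
            (is_grad_drop1 (Ppoly_indep0 _) dP))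
  (is_gradM (is_gradX 2 (is_grad_a1 a b)) (is_grad_drop1 (Qpoly_indep0 _) dQ))) _.
rewrite sub0r gconsN !gconsZ !gconsD gconsB !oppr0 !scaler0 addr0.
by congr gcons; ring.
Qed.

Lemma derivable_Ppoly n a b : derivable_coords (Pfun n) a b.
Proof.
suff Pn m : (forall a b, derivable_coords (Pfun m) a b)
            /\ (forall a b, derivable_coords (Pfun m.+1) a b) by have [] := Pn n.
elim: m => [|m [dPm dPm1]]; split=> // a' b'; apply: is_grad_derivable.
- exact: is_grad_Ppoly0.
- exact: is_grad_Ppoly1.
- by apply: is_grad_Ppoly_rec; [apply: dPm1 | apply/is_grad_QpolyS/dPm].
Qed.

Lemma derivable_Qpoly n a b : derivable_coords (Qfun n.+1) a b.
Proof. exact/is_grad_derivable/is_grad_QpolyS/derivable_Ppoly. Qed.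

Lemma grad_Ppoly0 a b : grad (Pfun 0) a b = 0.
Proof. exact/is_grad_grad/is_grad_Ppoly0. Qed.

Lemma grad_Ppoly1 a b : grad (Pfun 1) a b = gcons 0 (-1) 0.
Proof. exact/is_grad_grad/is_grad_Ppoly1. Qed.

Lemma grad_QpolyS n a b :
  grad (Qfun n.+1) a b = gcons 0 0 (grad (Pfun n) (drop1 a) (drop1 b)).
Proof. exact/is_grad_grad/is_grad_QpolyS/derivable_Ppoly. Qed.

Lemma grad_Ppoly_rec n a b :
  grad (Pfun n.+2) a b =
    gcons (- (2 * a 1%N * Qpoly n.+1 (drop1 a) (drop1 b) x))
          (- Ppoly n.+1 (drop1 a) (drop1 b) x)
          ((x - b 1%N) *: grad (Pfun n.+1) (drop1 a) (drop1 b)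
           - a 1%N ^+ 2 *: grad (Qfun n.+1) (drop1 a) (drop1 b)).
Proof. exact/is_grad_grad/is_grad_Ppoly_rec/derivable_Qpoly/derivable_Ppoly. Qed.

Lemma db1_Ppoly n a b : db 1 (Pfun n.+1) a b = - Qpoly n.+1 a b x.
Proof.
rewrite -[db 1 _ _ _]/((grad _ a b).2 0).
by case: n => [|n]; rewrite ?grad_Ppoly1 ?grad_Ppoly_rec //= /Qpoly det_mx00.
Qed.

Lemma db1_Qpoly n a b : db 1 (Qfun n.+1) a b = 0.
Proof. by rewrite -[db 1 _ _ _]/((grad _ a b).2 0) grad_QpolyS. Qed.

End JacobiPolynomials.

Local Notation Pfun n x := (fun a b => Ppoly n a b x).
Local Notation Qfun n x := (fun a b => Qpoly n a b x).

Lemma pbracket_Ppoly_Qpoly n N a b x y : (n < N)%N -> x != y ->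
  [/\ pbracket N (Pfun n.+1 x) (Pfun n.+1 y) a b = 0,
      pbracket N (Qfun n.+1 x) (Qfun n.+1 y) a b = 0 &
      pbracket N (Pfun n.+1 x) (Qfun n.+1 y) a b
      = 1 / 2 * (Qpoly n.+1 a b x * Qpoly n.+1 a b y
                 + (Qpoly n.+1 a b x * Ppoly n.+1 a b y
                    - Ppoly n.+1 a b x * Qpoly n.+1 a b y) / (x - y))].
Proof.
rewrite !pbracketE; elim: n N a b x y => [|n IH] N a b x y ltnN xy;
  have xy' : x - y != 0 by rewrite subr_eq0.
  rewrite !grad_Ppoly1 !grad_QpolyS !grad_Ppoly0 gcons0 pformxx !pform0r.
  by rewrite /Qpoly /= !det_mx00 !Ppoly1; split=> //; field.
case: N ltnN => [|[|M]] // ltnM.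
have yx : y != x by rewrite eq_sym.
have yx' : y - x != 0 by rewrite subr_eq0.
have [PP QQ PQ] := IH M.+1 (drop1 a) (drop1 b) x y ltnM xy.
have [_ _ QP] := IH M.+1 (drop1 a) (drop1 b) y x ltnM yx.
rewrite !(grad_Ppoly_rec _ n) !(grad_QpolyS _ n.+1) !pform_gcons.
rewrite !pformBl !pformZl !pformBr !pformZr !(gradDE, gradNE, gradZE) /=.
rewrite [pform _ _ (grad (Qfun _ x) _ _) _]pformC !db1_Ppoly !db1_Qpoly.
rewrite PP QQ PQ QP !Ppoly_rec !QpolyS.
by split; [field; rewrite xy' yx' | ring | field; rewrite xy'].
Qed.

End JacobiBracket.

Theorem theorem12p1 (R : realType) (N : nat) (c : R) (a b : nat -> R)
    (n : nat) (x y : R) :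
  (1 <= N)%N ->
  (forall k, (1 <= k < N)%N -> 0 < a k) ->
  \sum_(1 <= j < N.+1) b j = c ->
  (1 <= n <= N)%N ->
  Ppoly n a b y != 0 ->
  x != y ->
  pbracket N (fun a' b' => Ppoly n a' b' x) (fun a' b' => mJac n a' b' y) a b
    = 1 / 2 * (Qpoly n a b x * mJac n a b y
               - (Ppoly n a b x * mJac n a b y + Qpoly n a b x) / (x - y))
  /\
  pbracket N (fun a' b' => Qpoly n a' b' x) (fun a' b' => mJac n a' b' y) a b
    = 1 / 2 * (- Qpoly n a b x * mJac n a b y ^+ 2
               + mJac n a b y * (Ppoly n a b x * mJac n a b y + Qpoly n a b x)
                 / (x - y)).
Proof.
move=> _ _ _ /andP[n_gt0 n_le_N] Py_neq0 xy.
case: n n_gt0 n_le_N Py_neq0 => // n _ n_lt_N Py_neq0.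
have yx : y != x by rewrite eq_sym.
have dQy := derivable_Qpoly y n a b.
have dNQy := is_grad_derivable (is_gradN dQy).
have dPy := derivable_Ppoly y n.+1 a b.
rewrite /mJac !(pbracket_divr _ _ dNQy dPy Py_neq0) !(pbracketNr _ _ dQy).
have [PxPy QxQy PxQy] := pbracket_Ppoly_Qpoly a b n_lt_N xy.
have [_ _ PyQx] := pbracket_Ppoly_Qpoly a b n_lt_N yx.
rewrite PxPy PxQy QxQy pbracketC PyQx.
have xy' : x - y != 0 by rewrite subr_eq0.
have yx' : y - x != 0 by rewrite subr_eq0.
by split; field; rewrite ?xy' ?yx' ?Py_neq0.
Qed.
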